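(* Let $p$ be a prime, $k\ge1$, and $g\in{\rm AGL}(k,p)$, acting on $\mathbb F_p^k$, written as $g(x)=Ax+e$ with $A\in{\rm GL}(k,p)$ and $e\in\mathbb F_p^k$. Then $g$ is an imprimitive permutation of $\mathbb F_p^k$ if and only if the characteristic polynomial of $A$ is reducible over $\mathbb F_p$.
   Context: A permutation $g$ of a finite set $\Omega$ with $|\Omega|=n$ is called imprimitive if it preserves a partition of $\Omega$ into blocks of equal size $m$ with $1<m<n$ (equivalently, it lies in a transitive imprimitive subgroup of ${\rm Sym}(\Omega)$); otherwise it is primitive. *)

From mathcomp Require Import all_boot all_order all_algebra all_fingroup all_field.
Set Implicit Arguments. Unset Strict Implicit. Unset Printing Implicit Defensive.
Import GRing.Theory.
Local Open Scope ring_scope.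

Definition imprimitive (T : finType) (g : T -> T) : Prop :=
  exists (P : {set {set T}}) (m : nat),
    [/\ partition P [set: T],
        (1 < m < #|T|)%N,
        (forall B, B \in P -> #|B| = m) &
        (forall B, B \in P -> g @: B \in P)].

Definition affine_map (p k : nat) (A : 'M['F_p]_k) (e : 'cV['F_p]_k)
  : 'cV['F_p]_k -> 'cV['F_p]_k := fun x => A *m x + e.

From mathcomp Require Import all_boot all_order all_algebra all_fingroup all_field.
From mathcomp Require Import cyclic.
Set Implicit Arguments. Unset Strict Implicit. Unset Printing Implicit Defensive.
Import GRing.Theory.
Local Open Scope ring_scope.

(* If char_poly A is reducible, A stabilises a proper nonzero subspace W:
   the kernel of q(A) for a proper factor q of the minimal polynomial, or,
   when the minimal polynomial has degree < k, a cyclic subspace F_p[A] v.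
   The cosets of W are then blocks of g.  Conversely, if char_poly A is
   irreducible then so is the minimal polynomial, which equals it; A - 1 is
   invertible, so g fixes some x0, and translating the block through x0 to
   the origin gives an A-stable set S with |S| = p^a, 0 < a < k.  As F_p[A]
   is a field, <A> acts freely on S \ {0}, whence A^(p^a - 1) = 1: the
   minimal polynomial, irreducible of degree k > a, would divide
   X^(p^a) - X, which is impossible. *)

Section Blocks.

Variable T : finType.

Lemma imprimitive_of_equiv (g : T -> T) (R : rel T) (m : nat) :
    injective g -> equivalence_rel R ->
    (forall x, #|[set y | R x y]| = m) -> (1 < m < #|T|)%N ->
    {homo g : x y / R x y} ->
  imprimitive g.
Proof.
move=> g_inj eqR cardR m_range gR.
have eqR_T : {in [set: T] & &, equivalence_rel R}.
  by move=> x y z _ _ _; apply: eqR.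
have classE x : [set y in [set: T] | R x y] = [set y | R x y].
  by apply/setP => y; rewrite !inE.
exists (equivalence_partition R [set: T]), m; split => //.
- exact: equivalence_partitionP.
- by move=> B /imsetP[x _ ->]; rewrite classE.
move=> B /imsetP[x _ ->]; apply/imsetP; exists (g x) => //.
rewrite !classE; apply/eqP; rewrite eqEcard card_imset // !cardR leqnn andbT.
by apply/subsetP => z /imsetP[y]; rewrite inE => Rxy ->; rewrite inE gR.
Qed.

Variable P : {set {set T}}.
Hypothesis partP : partition P [set: T].

Lemma card_block_dvdn (m : nat) :
  (forall B, B \in P -> #|B| = m) -> (m %| #|T|)%N.
Proof.
move=> cardP; rewrite -cardsT (card_partition partP) (eq_bigr (fun=> m)) //.
by rewrite sum_nat_const dvdn_mull.
Qed.

Lemma imset_pblock_fixed (g : T -> T) (x : T) :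
  (forall B, B \in P -> g @: B \in P) -> g x = x -> g @: pblock P x = pblock P x.
Proof.
have [/eqP coverP trivP _] := and3P partP.
have xP : x \in cover P by rewrite coverP inE.
move=> gP gx; apply/esym/def_pblock => //; first exact/gP/pblock_mem.
by rewrite -{1}gx imset_f // mem_pblock.
Qed.

End Blocks.

Lemma imprimitive_card_not_prime (T : finType) (g : T -> T) :
  imprimitive g -> ~~ prime #|T|.
Proof.
move=> [P [m [partP /andP[m_gt1 m_lt] cardP _]]]; apply/negP => T_prime.
have := prime_nt_dvdP T_prime _ (card_block_dvdn partP cardP).
by rewrite neq_ltn m_gt1 orbT => /(_ isT) m_eq; rewrite m_eq ltnn in m_lt.
Qed.

Lemma irreducible_poly_eqp (R : idomainType) (p q : {poly R}) :
  p %= q -> irreducible_poly p -> irreducible_poly q.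
Proof.
move=> pq [p_gt1 p_irr]; split=> [|r r_neq1 rq]; first by rewrite -(eqp_size pq).
by rewrite -(eqp_rtrans pq) p_irr // (eqp_dvdr _ pq).
Qed.

Lemma reducible_poly_proper_dvdp (R : finIdomainType) (p : {poly R}) :
  (1 < size p)%N -> ~ irreducible_poly p ->
  exists2 q : {poly R}, q %| p & (1 < size q < size p)%N.
Proof.
move=> p_gt1 /irreducibleP; rewrite /irreducibleb p_gt1 negb_forall => /existsP[q].
rewrite negb_imply -ltnNge -Pdiv.Idomain.dvdpE => /andP[qp q_gt1].
by exists q; rewrite // q_gt1 (leq_ltn_trans (size_npoly q)) // ltn_predL ltnW.
Qed.

Lemma expf_card_expn (F : finFieldType) (a : nat) (x : F) : x ^+ (#|F| ^ a) = x.
Proof. by elim: a => [|a IHa]; rewrite ?expr1 // expnSr exprM IHa expf_card. Qed.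

Lemma irreducible_ndvdp_Xpow_subX (p a : nat) (h : {poly 'F_p}) :
    prime p -> irreducible_poly h -> h \is monic -> (0 < a < (size h).-1)%N ->
  ~~ (h %| 'X^(p ^ a) - 'X).
Proof.
move=> p_prime h_irr h_monic /andP[a_gt0 a_lt]; apply/negP => h_dvd.
have hI : monic_irreducible_poly h by split.
pose Q := {poly %/ h with hI}.
have pQ : p \in [pchar Q] by rewrite (pchar_qpoly h p) pchar_Fp.
have frobD (y z : Q) : (y + z) ^+ (p ^ a) = y ^+ (p ^ a) + z ^+ (p ^ a).
  by apply: exprDn_pchar; rewrite (eq_pnat _ (pcharf_eq pQ)) pnatX pnat_id.
have qX_fixed : ('qX : Q) ^+ (p ^ a) = 'qX.
  apply/eqP; rewrite -subr_eq0 -rmorphXn -rmorphB; apply/eqP/val_inj => /=.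
  by apply/eqP; rewrite (mk_monicE hI) -[_ == 0]/(Pdiv.Ring.rdvdp _ _) -dvdpE.
(* y |-> y ^+ p ^ a is additive, fixes 'F_p and 'qX, hence fixes all of Q. *)
have all_fixed (y : Q) : y ^+ (p ^ a) = y.
  have -> : y = in_qpoly h (val y).
    by apply: val_inj; rewrite /= Pdiv.Ring.rmodp_small // size_mk_monic.
  rewrite -[val y]coefK poly_def linear_sum /=.
  elim/big_ind: _ => [|u v uE vE | i _].
  - by rewrite expr0n expn_eq0 eqn0Ngt prime_gt0.
  - by rewrite frobD uE vE.
  - rewrite linearZ /= rmorphXn /= exprZn -exprM mulnC exprM qX_fixed.
    by have := expf_card_expn a y`_i; rewrite card_Fp // => ->.
have [p_gt1 pa_gt1] : (1 < p)%N /\ (1 < p ^ a)%N.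
  by rewrite prime_gt1 // -[1%N](expn0 p) ltn_exp2l ?prime_gt1.
have size_P : size ('X^(p ^ a) - 'X : {poly Q}) = (p ^ a).+1.
  by rewrite size_polyDl size_polyXn // size_polyN size_polyX ltnS.
have P_neq0 : ('X^(p ^ a) - 'X : {poly Q}) != 0 by rewrite -size_poly_eq0 size_P.
have roots : all (root ('X^(p ^ a) - 'X)) (enum Q).
  by apply/allP => y _; rewrite /root !hornerE all_fixed subrr.
have := max_poly_roots P_neq0 roots (enum_uniq Q).
by rewrite -cardE card_qfpoly card_Fp // size_P ltnS leq_exp2l // leqNgt a_lt.
Qed.

Section PermPower.

Local Open Scope group_scope.

Lemma perm_expg_card_stable (T : finType) (s : {perm T}) (S : {set T}) :
    s @: S \subset S ->
    (forall j x, x \in S -> (s ^+ j) x = x -> s ^+ j = 1) ->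
  s ^+ #|S| = 1.
Proof.
move=> sS s_free; apply/eqP; rewrite -order_dvdn.
have sSE : s @: S = S.
  by apply/eqP; rewrite eqEcard card_imset ?sS ?leqnn //; apply: perm_inj.
have actsS : [acts <[s]>, on S | 'P].
  rewrite cycle_subG; apply/astabsP => x /=.
  by rewrite -[aperm x s]/(s x) -{1}sSE (mem_imset _ _ perm_inj).
have stab1 x : x \in S -> 'C_<[s]>[x | 'P] = 1.
  move=> Sx; apply/trivgP/subsetP => t /setIP[/cycleP[j ->] /astab1P sjx].
  by rewrite inE (s_free j x).
rewrite -(acts_sum_card_orbit actsS) (eq_bigr (fun=> #[s])).
  by rewrite sum_nat_const dvdn_mull.
move=> _ /imsetP[x Sx ->]; have := card_orbit_stab 'P <[s]>%G x.
by rewrite stab1 // cards1 muln1.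
Qed.

End PermPower.

Lemma degree_mxminpoly_le (F : fieldType) (n : nat) (A : 'M[F]_n.+1) :
  (degree_mxminpoly A <= n.+1)%N.
Proof.
rewrite -ltnS -size_mxminpoly -(size_char_poly A) dvdp_leq ?mxminpoly_dvd_char //.
by rewrite monic_neq0 ?char_poly_monic.
Qed.

Lemma irreducible_char_polyE (F : fieldType) (n : nat) (A : 'M[F]_n.+1) :
  irreducible_poly (char_poly A) <->
  irreducible_poly (mxminpoly A) /\ degree_mxminpoly A = n.+1.
Proof.
have mu_char := mxminpoly_dvd_char A.
split=> [char_irr | [mu_irr d_eq]].
  have mu_eqp : mxminpoly A %= char_poly A.
    by apply: char_irr; rewrite // size_mxminpoly eqSS -lt0n mxminpoly_nonconstant.
  split; first by apply: irreducible_poly_eqp char_irr; rewrite eqp_sym.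
  by apply: succn_inj; rewrite -size_mxminpoly (eqp_size mu_eqp) size_char_poly.
apply: irreducible_poly_eqp mu_irr.
by rewrite -dvdp_size_eqp // size_mxminpoly size_char_poly d_eq.
Qed.

Section IrreducibleMinpoly.

Variables (F : fieldType) (n : nat) (A : 'M[F]_n.+1).
Hypothesis mu_irr : irreducible_poly (mxminpoly A).

Lemma horner_mx_eq0_or_unit (q : {poly F}) :
  horner_mx A q = 0 \/ horner_mx A q \in unitmx.
Proof.
have [mu_q | mu_nq] := boolP (mxminpoly A %| q); [left | right].
  by rewrite -(divpK mu_q) rmorphM /= mx_root_minpoly mulr0.
have /Bezout_eq1_coprimepP[[u v] /= uv1] : coprimep (mxminpoly A) q.
  by rewrite irreducible_poly_coprime.
have /(congr1 (horner_mx A)) := uv1; rewrite rmorphD !rmorphM /= mx_root_minpoly.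
by rewrite mulr0 add0r rmorph1 -mulmxE => /mulmx1_unit[].
Qed.

Lemma expr_eq1_of_fixed (j : nat) (x : 'cV[F]_n.+1) :
  x != 0 -> A ^+ j *m x = x -> A ^+ j = 1.
Proof.
move=> x_neq0 Ajx; have := horner_mx_eq0_or_unit ('X^j - 1).
rewrite rmorphB rmorphXn rmorph1 /= horner_mx_X => -[/eqP | Aj1_unit].
  by rewrite subr_eq0 => /eqP.
suff x0 : x = 0 by rewrite x0 eqxx in x_neq0.
by rewrite -[x](mulKmx Aj1_unit) mulmxBl Ajx mul1mx subrr mulmx0.
Qed.

End IrreducibleMinpoly.

Lemma expr_card_stable_eq1 (F : finFieldType) (n : nat) (A : 'M[F]_n.+1)
    (S : {set 'cV[F]_n.+1}) :
    A \in unitmx -> irreducible_poly (mxminpoly A) ->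
    0 \notin S -> {in S, forall y, A *m y \in S} ->
  A ^+ #|S| = 1.
Proof.
move=> A_unit mu_irr S0 SA.
pose s : {perm 'cV[F]_n.+1} := perm (can_inj (mulKmx A_unit)).
have sE j x : (s ^+ j)%g x = A ^+ j *m x.
  rewrite permX; elim: j => [|j IHj]; first by rewrite expr0 mul1mx.
  by rewrite iterS IHj permE exprS mulmxA.
have sS1 : (s ^+ #|S|)%g = 1%g.
  apply: perm_expg_card_stable => [|j x Sx].
    by apply/subsetP => _ /imsetP[x Sx ->]; rewrite permE SA.
  have x_neq0 : x != 0 by apply: contraNneq _ S0 => <-.
  rewrite sE => /(expr_eq1_of_fixed mu_irr x_neq0) Aj1.
  by apply/permP => y; rewrite sE Aj1 mul1mx perm1.
apply/matrixP => i j.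
have := congr1 (fun v : 'cV[F]_n.+1 => v i 0) (sE #|S| (delta_mx j 0)).
by rewrite sS1 perm1 -colE !mxE andbT => <-.
Qed.

Section AffineSubspace.

Variables (p n : nat) (A : 'M['F_p]_n) (e : 'cV['F_p]_n).
Hypothesis A_unit : A \in unitmx.

Lemma affine_map_inj : injective (affine_map A e).
Proof. by move=> x y /addIr/(can_inj (mulKmx A_unit)). Qed.

Lemma imprimitive_affine_of_subspace (W : {set 'cV['F_p]_n}) :
    0 \in W -> {in W &, forall x y, x - y \in W} ->
    {in W, forall x, A *m x \in W} -> (1 < #|W| < #|'cV['F_p]_n|)%N ->
  imprimitive (affine_map A e).
Proof.
move=> W0 WB WA W_range.
have WN x : x \in W -> - x \in W by move=> Wx; rewrite -sub0r WB.
have WD x y : x \in W -> y \in W -> x + y \in W.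
  by move=> Wx Wy; rewrite -[y]opprK WB ?WN.
apply: (@imprimitive_of_equiv _ _ [rel x y | y - x \in W] #|W|) => //.
- exact: affine_map_inj.
- move=> x y z /=; rewrite subrr W0; split=> // Wyx.
  apply/idP/idP => [Wzx | Wzy].
    have -> : z - y = (z - x) - (y - x) by rewrite opprB addrA subrK.
    exact: WB.
  have -> : z - x = (z - y) + (y - x) by rewrite addrA subrK.
  exact: WD.
- move=> x; rewrite -(card_imset W (addrI x)); apply: eq_card => y.
  rewrite inE /=; apply/idP/imsetP => [Wyx | [w Ww ->]].
    by exists (y - x); rewrite // addrC subrK.
  by rewrite [x + w]addrC addrK.
- by move=> x y /= Wyx; rewrite /affine_map opprD addrACA subrr addr0 -mulmxBr WA.
Qed.

Lemma imprimitive_affine_of_kernel (M : 'M['F_p]_n) :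
    M *m A = A *m M -> M != 0 -> M \notin unitmx ->
  imprimitive (affine_map A e).
Proof.
move=> MA M_neq0 M_sing; pose W := [set y : 'cV_n | M *m y == 0].
apply: (@imprimitive_affine_of_subspace W).
- by rewrite inE mulmx0.
- by move=> x y; rewrite !inE mulmxBr => /eqP-> /eqP->; rewrite subrr.
- by move=> x; rewrite !inE mulmxA MA -mulmxA => /eqP->; rewrite mulmx0.
apply/andP; split.
  have /det0P[v v_neq0 vM] : \det M^T == 0.
    by rewrite det_tr; move: M_sing; rewrite unitmxE unitfE negbK.
  apply/card_gt1P; exists 0, v^T; split.
  - by rewrite inE mulmx0.
  - by rewrite inE -[M]trmxK -trmx_mul vM trmx0.
  - by rewrite eq_sym -trmx0 (inj_eq trmx_inj).
rewrite -cardsT proper_card // properT; apply: contra M_neq0 => /eqP W_T.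
apply/eqP/matrixP => i j; have : delta_mx j 0 \in W by rewrite W_T inE.
by rewrite inE => /eqP/(congr1 (fun v : 'cV_n => v i 0)); rewrite -colE !mxE.
Qed.

End AffineSubspace.

Lemma imprimitive_affine_of_reducible_mxminpoly (p n : nat)
    (A : 'M['F_p]_n.+1) (e : 'cV['F_p]_n.+1) :
  A \in unitmx -> ~ irreducible_poly (mxminpoly A) -> imprimitive (affine_map A e).
Proof.
move=> A_unit mu_red; set mu := mxminpoly A.
have mu_gt1 : (1 < size mu)%N by rewrite size_mxminpoly ltnS mxminpoly_nonconstant.
have [q q_mu /andP[q_gt1 q_lt]] := reducible_poly_proper_dvdp mu_gt1 mu_red.
have q_neq0 : q != 0 by rewrite -size_poly_eq0 -lt0n ltnW.
have mu_neq0 : mu != 0 by rewrite -size_poly_eq0 -lt0n ltnW.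
pose r := mu %/ q; have mu_rq : mu = r * q by rewrite divpK.
have r_neq0 : r != 0 by apply: contraNneq mu_neq0; rewrite mu_rq => ->; rewrite mul0r.
have rA_neq0 : horner_mx A r != 0.
  have r_lt : (size r < size mu)%N.
    by rewrite size_divp // ltn_subrL -subn1 subn_gt0 q_gt1 ltnW.
  by apply: contraTneq r_lt => /mxminpoly_min/(dvdp_leq r_neq0); rewrite -leqNgt.
apply: (@imprimitive_affine_of_kernel _ _ A e A_unit (horner_mx A q)).
- by rewrite !mulmxE -{2 3}(horner_mx_X A) -!rmorphM mulrC.
- apply: contraTneq q_lt => /mxminpoly_min/(dvdp_leq _) q_le.
  by rewrite -leqNgt q_le // -size_poly_eq0 -lt0n ltnW.
apply: contra rA_neq0 => qA_unit; apply/eqP.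
rewrite -[horner_mx A r](mulmxK qA_unit) mulmxE -rmorphM /= -mu_rq.
by rewrite mx_root_minpoly mul0r.
Qed.

Lemma imprimitive_affine_of_small_mxminpoly (p n : nat) (p_prime : prime p)
    (A : 'M['F_p]_n.+1) (e : 'cV['F_p]_n.+1) :
  A \in unitmx -> (degree_mxminpoly A <= n)%N -> imprimitive (affine_map A e).
Proof.
move=> A_unit d_le; set d := degree_mxminpoly A.
have horner_mod q : horner_mx A (q %% mxminpoly A) = horner_mx A q.
  by rewrite -horner_mxK mx_inv_hornerK ?horner_mx_mem.
pose v : 'cV['F_p]_n.+1 := delta_mx 0 0.
(* The cyclic subspace F_p[A] v has at most p ^ d < p ^ n.+1 elements. *)
pose W := [set horner_mx A q *m v | q : {poly_d 'F_p}].
have Wq (q : {poly 'F_p}) : (size q <= d)%N -> horner_mx A q *m v \in W.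
  by move=> q_le; apply/imsetP; exists (npolyp d q); rewrite ?npolypK.
apply: (@imprimitive_affine_of_subspace _ _ A e A_unit W).
- by rewrite -(mul0mx _ v) -(rmorph0 (horner_mx A)) Wq ?size_poly0.
- move=> _ _ /imsetP[q1 _ ->] /imsetP[q2 _ ->].
  by apply/imsetP; exists (q1 - q2); rewrite //= rmorphB mulmxBl.
- move=> _ /imsetP[q _ ->]; rewrite mulmxA -{1}(horner_mx_X A) mulmxE -rmorphM /=.
  by rewrite -horner_mod Wq ?size_mod_mxminpoly.
apply/andP; split.
  apply/card_gt1P; exists 0, v; split.
  - by rewrite -(mul0mx _ v) -(rmorph0 (horner_mx A)) Wq ?size_poly0.
  - rewrite -[v]mul1mx -[1%:M](horner_mx_C A) Wq // size_polyC oner_neq0.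
    exact: mxminpoly_nonconstant.
  - by rewrite eq_sym; apply/eqP => /matrixP/(_ 0 0)/eqP; rewrite !mxE oner_eq0.
apply: leq_ltn_trans (leq_imset_card _ _) _.
by rewrite card_npoly card_mx card_Fp // muln1 ltn_exp2l ?prime_gt1.
Qed.

Section AffineFixedPoint.

Variables (p n : nat) (A : 'M['F_p]_n) (e : 'cV['F_p]_n).

Lemma affine_map_fixed :
  A - 1 \in unitmx -> affine_map A e (invmx (A - 1) *m - e) = invmx (A - 1) *m - e.
Proof.
move=> A1_unit; apply/eqP; rewrite /affine_map -subr_eq0 addrAC.
by rewrite -[X in _ - X]mul1mx -mulmxBl mulKVmx // addNr.
Qed.

Lemma imprimitive_affine_stable_block (x0 : 'cV['F_p]_n) :
    affine_map A e x0 = x0 -> imprimitive (affine_map A e) ->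
  exists S : {set 'cV['F_p]_n},
    [/\ 0 \in S, {in S, forall y, A *m y \in S},
        (1 < #|S| < #|'cV['F_p]_n|)%N & (#|S| %| #|'cV['F_p]_n|)%N].
Proof.
move=> gx0 [P [m [partP m_range cardP gP]]].
have BP : pblock P x0 \in P by rewrite pblock_mem // (cover_partition partP) inE.
have x0B : x0 \in pblock P x0 by rewrite mem_pblock (cover_partition partP) inE.
have gB := imset_pblock_fixed partP gP gx0.
have cardS : #|[set y | x0 + y \in pblock P x0]| = m.
  rewrite -(cardP _ BP) -(card_imset _ (addrI (- x0))); apply: eq_card => y.
  rewrite inE; apply/idP/imsetP => [x0yB | [z zB ->]]; last by rewrite addNKr.
  by exists (x0 + y); rewrite ?addKr.
exists [set y | x0 + y \in pblock P x0]; split; rewrite ?cardS //.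
- by rewrite inE addr0.
- move=> y; rewrite !inE -{2}gB => x0yB; apply/imsetP; exists (x0 + y) => //.
  by rewrite /affine_map mulmxDr addrAC -[A *m x0 + e]/(affine_map A e x0) gx0.
- exact (card_block_dvdn partP cardP).
Qed.

End AffineFixedPoint.

Lemma primitive_affine_of_irreducible_char_poly (p n : nat) (p_prime : prime p)
    (A : 'M['F_p]_n.+1) (e : 'cV['F_p]_n.+1) :
  A \in unitmx -> irreducible_poly (char_poly A) -> ~ imprimitive (affine_map A e).
Proof.
move=> A_unit /irreducible_char_polyE[mu_irr d_eq] imp.
have card_cV : #|'cV['F_p]_n.+1| = (p ^ n.+1)%N by rewrite card_mx card_Fp // muln1.
(* Needed to invert A - 1: a 1 x 1 matrix A may be the identity. *)
have n_gt0 : (0 < n)%N.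
  rewrite lt0n; apply: contraNneq (imprimitive_card_not_prime imp) => n0.
  by rewrite card_cV n0 expn1.
have A1_unit : A - 1 \in unitmx.
  have [/mxminpoly_min/(dvdp_leq (negbT (polyXsubC_eq0 1))) | ] :=
    horner_mx_eq0_or_unit mu_irr ('X - 1%:P).
    by rewrite size_mxminpoly d_eq size_XsubC !ltnS leqNgt n_gt0.
  by rewrite rmorphB /= horner_mx_X horner_mx_C.
have [S [S0 SA S_range S_dvd]] :=
  imprimitive_affine_stable_block (affine_map_fixed e A1_unit) imp.
rewrite card_cV in S_range S_dvd.
have [a _ cardS] : exists2 a, (a <= n.+1)%N & #|S| = (p ^ a)%N.
  exact/dvdn_pfactor.
have /andP[a_gt0 a_lt] : (0 < a < n.+1)%N.
  have p_gt1 := prime_gt1 p_prime.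
  by rewrite -(ltn_exp2l 0 _ p_gt1) -(ltn_exp2l _ n.+1 p_gt1) expn0 -cardS.
have AS1 : A ^+ (p ^ a).-1 = 1.
  rewrite -cardS (cardsD1 0 S) S0 /=; apply: expr_card_stable_eq1; rewrite ?setD11 //.
  move=> y; rewrite !inE => /andP[y_neq0 Sy]; rewrite SA // andbT.
  by apply: contra y_neq0 => /eqP Ay0; rewrite -(mulKmx A_unit y) Ay0 mulmx0.
have mu_dvd : mxminpoly A %| 'X^(p ^ a) - 'X.
  apply: mxminpoly_min; rewrite rmorphB rmorphXn /= horner_mx_X.
  have pa_gt0 : (0 < p ^ a)%N by rewrite expn_gt0 prime_gt0.
  by rewrite -(prednK pa_gt0) exprS AS1 mulr1 subrr.
apply/negP: mu_dvd; apply: irreducible_ndvdp_Xpow_subX => //.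
  exact: mxminpoly_monic.
by rewrite a_gt0 size_mxminpoly d_eq.
Qed.

Lemma imprimitive_affine_of_reducible_char_poly (p n : nat) (p_prime : prime p)
    (A : 'M['F_p]_n.+1) (e : 'cV['F_p]_n.+1) :
  A \in unitmx -> ~ irreducible_poly (char_poly A) -> imprimitive (affine_map A e).
Proof.
move=> A_unit char_red.
have [d_le | d_gt] := leqP (degree_mxminpoly A) n.
  exact: imprimitive_affine_of_small_mxminpoly.
apply: imprimitive_affine_of_reducible_mxminpoly => // mu_irr; apply: char_red.
apply/irreducible_char_polyE; split=> //.
by apply/eqP; rewrite eqn_leq d_gt degree_mxminpoly_le.
Qed.

Theorem mainTheorem5 (p k : nat) (hp : prime p) (hk : (0 < k)%N)
  (A : 'M['F_p]_k) (hA : A \in unitmx) (e : 'cV['F_p]_k) :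
  imprimitive (affine_map A e) <-> ~ irreducible_poly (char_poly A).
Proof.
case: k hk A hA e => // n _ A A_unit e; split.
  by move=> imp char_irr; apply: primitive_affine_of_irreducible_char_poly imp.
exact: imprimitive_affine_of_reducible_char_poly.
Qed.
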